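(* Let $\Theta$ and $\Theta'$ be causally complete spaces of input histories with $E^\Theta\cap E^{\Theta'}=\emptyset$. Then the parallel composition $\Theta\cup\Theta'$ and the sequential composition $\Theta\rightsquigarrow\Theta'$ are causally complete.
   Context: A partial function is a function $f$ with domain $\mathrm{dom}(f)$ a subset of an index set, values in given sets; ordered by restriction. Compatible = agreeing on common domain; a compatible set $\mathcal F$ has join $\bigvee\mathcal F$ (union); $k\vee h$ is the join of two compatible functions. $\Theta$ is $\vee$-prime if for compatible $\mathcal F\subseteq\Theta$ with $\bigvee\mathcal F\in\Theta$ we have $\bigvee\mathcal F\in\mathcal F$. A space of input histories is a finite $\vee$-prime set of partial functions; $E^\Theta=\bigcup_{h\in\Theta}\mathrm{dom}(h)$, $I^\Theta_\omega=\{h(\omega):h\in\Theta,\omega\in\mathrm{dom}(h)\}$, $\mathrm{Ext}(\Theta)=\{\bigvee\mathcal F:\emptyset\ne\mathcal F\subseteq\Theta\text{ compatible}\}$. Free-choice: maximal elements of $\mathrm{Ext}(\Theta)$ are exactly the total functions in $\prod_{\omega\in E^\Theta}I^\Theta_\omega$. $\mathrm{tips}_\Theta(h)=\mathrm{dom}(h)\setminus\bigcup\{\mathrm{dom}(k):k\in\mathrm{Ext}(\Theta),k<h\}$. Causally complete: free-choice and $|\mathrm{tips}_\Theta(h)|=1$ for all $h\in\Theta$. For spaces with disjoint event sets, the parallel composition is the union $\Theta\cup\Theta'$ and the sequential composition is $\Theta\rightsquigarrow\Theta'=\Theta\cup\{k\vee h':k\in\max\mathrm{Ext}(\Theta),\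 h'\in\Theta'\}$. *)

From Stdlib Require Import List.
Set Implicit Arguments.

(* A partial function on the index set I with values in X:
   its domain is the set of i with h i <> None. *)
Definition pfun (I X : Type) := I -> option X.

Definition pset (I X : Type) := pfun I X -> Prop.

Section Defs.
Variables (I X : Type).
Implicit Types (h k j : pfun I X) (F Theta : pset I X).

Definition dom h (i : I) : Prop := h i <> None.

Definition pf_le k h : Prop := forall i x, k i = Some x -> h i = Some x.
Definition pf_lt k h : Prop := pf_le k h /\ k <> h.

Definition compatible F : Prop :=
  forall f g i x y, F f -> F g -> f i = Some x -> g i = Some y -> x = y.

Definition is_join F j : Prop :=
  forall i x, j i = Some x <-> exists f, F f /\ f i = Some x.

Definition is_join2 k h j : Prop :=
  forall i x, j i = Some x <-> (k i = Some x \/ h i = Some x).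

Definition subset F Theta : Prop := forall f, F f -> Theta f.

Definition finite_pset Theta : Prop :=
  exists l : list (pfun I X), forall h, Theta h <-> In h l.

Definition vee_prime Theta : Prop :=
  forall F j, subset F Theta -> compatible F -> is_join F j -> Theta j -> F j.

Definition space Theta : Prop := finite_pset Theta /\ vee_prime Theta.

Definition events Theta (i : I) : Prop := exists h, Theta h /\ dom h i.

Definition inputs Theta (i : I) (x : X) : Prop := exists h, Theta h /\ h i = Some x.

Definition Ext Theta k : Prop :=
  exists F, subset F Theta /\ (exists f, F f) /\ compatible F /\ is_join F k.

Definition maxExt Theta k : Prop :=
  Ext Theta k /\ forall k', Ext Theta k' -> pf_le k k' -> k' = k.

(* total functions in prod_{w in E^Theta} I^Theta_w *)
Definition total_on Theta k : Prop :=
  forall i, (events Theta i -> exists x, k i = Some x /\ inputs Theta i x) /\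
            (~ events Theta i -> k i = None).

Definition free_choice Theta : Prop :=
  forall k, maxExt Theta k <-> total_on Theta k.

Definition tips Theta h (i : I) : Prop :=
  dom h i /\ ~ (exists k, Ext Theta k /\ pf_lt k h /\ dom k i).

Definition causally_complete Theta : Prop :=
  free_choice Theta /\ forall h, Theta h -> exists! i, tips Theta h i.

Definition disjoint_events Theta Theta' : Prop :=
  forall i, events Theta i -> events Theta' i -> False.

Definition par_comp Theta Theta' : pset I X := fun h => Theta h \/ Theta' h.

Definition seq_comp Theta Theta' : pset I X := fun h =>
  Theta h \/ exists k h', maxExt Theta k /\ Theta' h' /\ is_join2 k h' h.

End Defs.

(* Both compositions consist of a Theta-part and a Theta'-part living on
   disjoint event sets, and members of a vee-prime space are nonempty, so no
   member of one part lies below a member of the other.  Hence members below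
   a history, elements of Ext and total functions of the composite all split
   along the two event sets, and each property of causal completeness is
   inherited from the parts.  For the sequential composition the Theta-part
   of a history k \/ h' is a maximal, hence total, k; two total functions
   below a common history coincide, which makes the splitting unique and
   shows that the tips of k \/ h' are exactly the tips of h' in Theta'. *)

From Stdlib Require Import List Classical FunctionalExtensionality.
From Stdlib Require Import PropExtensionality ClassicalEpsilon.
Import ListNotations.
Set Implicit Arguments.
Unset Strict Implicit.

Section PartialFunctions.
Variables (I X : Type).
Implicit Types (f g h k t : pfun I X) (F T U : pset I X).

Definition agree k h : Prop :=
  forall i x y, k i = Some x -> h i = Some y -> x = y.

(* Left-biased union; it is the join [k \/ h] whenever [agree k h]. *)
Definition pf_join k h : pfun I X := fun i =>
  match k i with Some x => Some x | None => h i end.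

Definition restrict (P : I -> Prop) k : pfun I X := fun i =>
  if excluded_middle_informative (P i) then k i else None.

Definition within T f : Prop := forall i x, f i = Some x -> events T i.

Definition unique_tips T : Prop := forall h, T h -> exists! i, tips T h i.

Lemma pf_le_refl k : pf_le k k.
Proof. intros i x Hi; exact Hi. Qed.

Lemma pf_le_trans f g h : pf_le f g -> pf_le g h -> pf_le f h.
Proof. intros Hfg Hgh i x Hi; exact (Hgh i x (Hfg i x Hi)). Qed.

Lemma pf_le_antisym k h : pf_le k h -> pf_le h k -> k = h.
Proof.
  intros Hkh Hhk. extensionality i.
  destruct (k i) as [x|] eqn:Ek; [symmetry; exact (Hkh i x Ek)|].
  destruct (h i) as [y|] eqn:Eh; [|reflexivity].
  rewrite (Hhk i y Eh) in Ek; discriminate.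
Qed.

Lemma agree_of_le f g k : pf_le f k -> pf_le g k -> agree f g.
Proof. intros Hf Hg i x y Hx Hy. apply Hf in Hx; apply Hg in Hy. congruence. Qed.

Lemma pf_join_le_l k h : pf_le k (pf_join k h).
Proof. intros i x Hi. unfold pf_join. rewrite Hi. reflexivity. Qed.

Lemma pf_join_le_r k h : agree k h -> pf_le h (pf_join k h).
Proof.
  intros Hag i x Hi. unfold pf_join.
  destruct (k i) as [y|] eqn:Ek; [f_equal; exact (Hag i y x Ek Hi) | exact Hi].
Qed.

Lemma pf_join_mono_r t g k : pf_le g k -> pf_le (pf_join t g) (pf_join t k).
Proof. intros Hgk i x. unfold pf_join. destruct (t i); auto. Qed.

Lemma pf_join_is_join2 k h : agree k h -> is_join2 k h (pf_join k h).
Proof.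
  intros Hag i x. split.
  - unfold pf_join. destruct (k i) as [y|]; auto.
  - intros [Hi|Hi]; [apply pf_join_le_l | apply (pf_join_le_r Hag)]; exact Hi.
Qed.

Lemma is_join2_pf_join k h j : is_join2 k h j -> j = pf_join k h.
Proof.
  intros Hj. extensionality i. unfold pf_join.
  destruct (k i) as [x|] eqn:Ek; [apply Hj; left; exact Ek|].
  destruct (j i) as [y|] eqn:Ej.
  - apply Hj in Ej as [E|E]; congruence.
  - destruct (h i) as [y|] eqn:Eh; [|reflexivity].
    assert (Hji : j i = Some y) by (apply Hj; right; exact Eh). congruence.
Qed.

Lemma restrict_le P k : pf_le (restrict P k) k.
Proof.
  intros i x. unfold restrict.
  destruct (excluded_middle_informative (P i)); [auto | discriminate].
Qed.

Lemma restrict_in P k i : P i -> restrict P k i = k i.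
Proof.
  intros HP. unfold restrict.
  destruct (excluded_middle_informative (P i)); [reflexivity | contradiction].
Qed.

Lemma restrict_out P k i : ~ P i -> restrict P k i = None.
Proof.
  intros HP. unfold restrict.
  destruct (excluded_middle_informative (P i)); [contradiction | reflexivity].
Qed.

Lemma restrict_some P k i x : restrict P k i = Some x -> P i /\ k i = Some x.
Proof.
  unfold restrict. destruct (excluded_middle_informative (P i)); [auto | discriminate].
Qed.

Lemma restrict_mono P f g : pf_le f g -> pf_le (restrict P f) (restrict P g).
Proof.
  intros Hfg i x Hi. apply restrict_some in Hi as [HP Hi].
  rewrite restrict_in by exact HP. exact (Hfg i x Hi).
Qed.

Lemma pf_join_restrict (P Q : I -> Prop) k :
  (forall i x, k i = Some x -> P i \/ Q i) ->
  pf_join (restrict P k) (restrict Q k) = k.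
Proof.
  intros Hcov. extensionality i. unfold pf_join.
  destruct (classic (P i)) as [HP|HP]; [rewrite restrict_in by exact HP|].
  - destruct (k i) eqn:Ek; [reflexivity|].
    destruct (restrict Q k i) eqn:Eq; [|reflexivity].
    apply restrict_some in Eq as [_ Eq]. congruence.
  - rewrite restrict_out by exact HP.
    destruct (classic (Q i)) as [HQ|HQ]; [apply restrict_in, HQ|].
    rewrite restrict_out by exact HQ.
    destruct (k i) as [x|] eqn:Ek; [|reflexivity].
    destruct (Hcov i x Ek); contradiction.
Qed.

Lemma inputs_events T i x : inputs T i x -> events T i.
Proof.
  intros (h & Hh & Hi). exists h. split; [exact Hh|]. unfold dom. rewrite Hi. discriminate.
Qed.

Lemma events_inputs T i : events T i -> exists x, inputs T i x.
Proof.
  intros (h & Hh & Hd). unfold dom in Hd.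
  destruct (h i) as [x|] eqn:Ei; [exists x, h; auto | contradiction].
Qed.

Lemma is_join_le F j f : is_join F j -> F f -> pf_le f j.
Proof. intros HJ Hf i x Hi. apply HJ. exists f; auto. Qed.

Lemma is_join_of_cover F k :
  (forall f, F f -> pf_le f k) ->
  (forall i x, k i = Some x -> exists f, F f /\ f i = Some x) ->
  compatible F /\ is_join F k.
Proof.
  intros Hle Hcov. split.
  - intros f g i x y Hf Hg Hx Hy. apply (Hle f Hf) in Hx. apply (Hle g Hg) in Hy. congruence.
  - intros i x. split; [apply Hcov | intros (f & Hf & Hi); exact (Hle f Hf i x Hi)].
Qed.

Lemma is_join_unique F a b : is_join F a -> is_join F b -> a = b.
Proof.
  intros Ha Hb. apply pf_le_antisym; intros i x Hi; [apply Hb, Ha, Hi | apply Ha, Hb, Hi].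
Qed.

Lemma Ext_inputs T k i x : Ext T k -> k i = Some x -> inputs T i x.
Proof.
  intros (F & HS & _ & _ & HJ) Hk. apply HJ in Hk as (f & Hf & Hfi). exists f; auto.
Qed.

Lemma member_within T h : T h -> within T h.
Proof. intros Hh i x Hi. apply inputs_events with x. exists h; auto. Qed.

Lemma Ext_within T k : Ext T k -> within T k.
Proof. intros Hk i x Hi. exact (inputs_events (Ext_inputs Hk Hi)). Qed.

Lemma agree_within T1 T2 f g :
  disjoint_events T1 T2 -> within T1 f -> within T2 g -> agree f g.
Proof. intros HD Hf Hg i x y Hx Hy. exfalso. exact (HD i (Hf i x Hx) (Hg i y Hy)). Qed.

Lemma restrict_pf_join_r T1 T2 t h :
  disjoint_events T1 T2 -> within T1 t -> within T2 h ->
  restrict (events T2) (pf_join t h) = h.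
Proof.
  intros HD Ht Hh. extensionality i. unfold pf_join.
  destruct (classic (events T2 i)) as [He|He].
  - rewrite restrict_in by exact He.
    destruct (t i) as [x|] eqn:Et; [exfalso; exact (HD i (Ht i x Et) He) | reflexivity].
  - rewrite restrict_out by exact He.
    destruct (h i) as [x|] eqn:Eh; [exfalso; exact (He (Hh i x Eh)) | reflexivity].
Qed.

(* The empty function is the join of the empty family. *)
Lemma vee_prime_nonempty T h : vee_prime T -> T h -> exists i x, h i = Some x.
Proof.
  intros HV Hh. apply NNPP. intros Hempty.
  refine (HV (fun _ => False) h _ _ _ Hh).
  - intros f [].
  - intros f g i x y [].
  - intros i x. split; [intros Hi; exfalso; eauto | intros (f & [] & _)].
Qed.

Lemma not_le_member A B f h :
  disjoint_events A B -> vee_prime B -> A h -> B f -> ~ pf_le f h.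
Proof.
  intros HD HV Hh Hf Hle. destruct (vee_prime_nonempty HV Hf) as (i & x & Hi).
  exact (HD i (member_within Hh (Hle i x Hi)) (member_within Hf Hi)).
Qed.

Lemma vee_prime_at T U j :
  vee_prime T -> T j -> (forall f, pf_le f j -> U f -> T f) ->
  forall F, subset F U -> compatible F -> is_join F j -> F j.
Proof.
  intros HV Hj Hdown F HS HC HJ. apply HV; auto.
  intros f Hf. exact (Hdown f (is_join_le HJ Hf) (HS f Hf)).
Qed.

Lemma Ext_below T U h k :
  (forall f, pf_le f h -> T f -> U f) -> pf_le k h -> Ext T k -> Ext U k.
Proof.
  intros Hdown Hkh (F & HS & HN & HC & HJ).
  refine (ex_intro _ F (conj _ (conj HN (conj HC HJ)))).
  intros f Hf. exact (Hdown f (pf_le_trans (is_join_le HJ Hf) Hkh) (HS f Hf)).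
Qed.

Lemma Ext_mono T U k : (forall f, T f -> U f) -> Ext T k -> Ext U k.
Proof. intros HTU. apply Ext_below with k; [auto | apply pf_le_refl]. Qed.

Lemma tips_below_eq T U h :
  (forall f, pf_le f h -> T f <-> U f) -> tips T h = tips U h.
Proof.
  intros Hdown.
  assert (HExt : forall k, pf_le k h -> Ext T k <-> Ext U k).
  { intros k Hkh. split; apply Ext_below with h; auto; intros f Hf; apply Hdown, Hf. }
  extensionality i. apply propositional_extensionality. unfold tips.
  split; intros [Hd Hn]; split; auto; intros (k & Hk & Hlt & Hdk);
    apply Hn; exists k; split; auto; apply (HExt k (proj1 Hlt)), Hk.
Qed.

Lemma Ext_union A B a b :
  Ext A a -> Ext B b -> agree a b -> Ext (par_comp A B) (pf_join a b).
Proof.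
  intros (Fa & HSa & [fa Hfa] & _ & HJa) (Fb & HSb & _ & _ & HJb) Hag.
  destruct (is_join_of_cover (F := fun f => Fa f \/ Fb f) (k := pf_join a b))
    as [HC HJ].
  - intros f [Hf|Hf].
    + exact (pf_le_trans (is_join_le HJa Hf) (pf_join_le_l b)).
    + exact (pf_le_trans (is_join_le HJb Hf) (pf_join_le_r Hag)).
  - intros i x Hi. apply (pf_join_is_join2 Hag) in Hi as [Hi|Hi];
      [apply HJa in Hi | apply HJb in Hi]; destruct Hi as (f & Hf & Hfi); eauto.
  - refine (ex_intro _ _ (conj _ (conj (ex_intro _ fa (or_introl Hfa)) (conj HC HJ)))).
    intros f [Hf|Hf]; [left; apply HSa | right; apply HSb]; exact Hf.
Qed.

Lemma Ext_pf_join_l T U t k :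
  Ext T k -> (forall g, T g -> U (pf_join t g)) -> Ext U (pf_join t k).
Proof.
  intros (F & HS & [g0 Hg0] & _ & HJ) HU.
  set (G := fun f => exists g, F g /\ f = pf_join t g).
  destruct (is_join_of_cover (F := G) (k := pf_join t k)) as [HC HJ'].
  - intros f (g & Hg & ->). apply pf_join_mono_r, (is_join_le HJ Hg).
  - intros i x Hi. unfold pf_join in Hi. destruct (t i) as [y|] eqn:Et.
    + exists (pf_join t g0). split; [exists g0; auto | unfold pf_join; rewrite Et; exact Hi].
    + apply HJ in Hi as (g & Hg & Hgi).
      exists (pf_join t g). split; [exists g; auto | unfold pf_join; rewrite Et; exact Hgi].
  - refine (ex_intro _ G (conj _ (conj (ex_intro _ _ (ex_intro _ g0 (conj Hg0 eq_refl)))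
      (conj HC HJ')))).
    intros f (g & Hg & ->). exact (HU g (HS g Hg)).
Qed.

Lemma total_on_agree_eq T t1 t2 :
  total_on T t1 -> total_on T t2 -> agree t1 t2 -> t1 = t2.
Proof.
  intros H1 H2 Hag. extensionality i. destruct (classic (events T i)) as [He|He].
  - destruct (proj1 (H1 i) He) as (x & Hx & _), (proj1 (H2 i) He) as (y & Hy & _).
    rewrite Hx, Hy. f_equal. exact (Hag i x y Hx Hy).
  - rewrite (proj2 (H1 i) He), (proj2 (H2 i) He). reflexivity.
Qed.

Lemma maxExt_unique_below T t1 t2 h :
  free_choice T -> maxExt T t1 -> maxExt T t2 -> pf_le t1 h -> pf_le t2 h -> t1 = t2.
Proof.
  intros HF H1 H2 Hle1 Hle2. apply total_on_agree_eq with T;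
    [apply HF, H1 | apply HF, H2 | exact (agree_of_le Hle1 Hle2)].
Qed.

Definition some_input T : pfun I X := fun i =>
  match excluded_middle_informative (exists x, inputs T i x) with
  | left H => Some (proj1_sig (constructive_indefinite_description _ H))
  | right _ => None
  end.

Lemma some_input_total T : total_on T (some_input T).
Proof.
  intros i. unfold some_input.
  destruct (excluded_middle_informative _) as [H|H]; split; intros He.
  - destruct (constructive_indefinite_description _ H) as [x Hx]. exists x; auto.
  - exfalso. destruct H as [x Hx]. exact (He (inputs_events Hx)).
  - exfalso. exact (H (events_inputs He)).
  - reflexivity.
Qed.

Lemma pf_join_total T k s :
  (forall i x, k i = Some x -> inputs T i x) -> total_on T s -> total_on T (pf_join k s).
Proof.
  intros Hk Hs i. unfold pf_join. destruct (k i) as [x|] eqn:Ek; [|exact (Hs i)].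
  split; [intros _; exists x; auto | intros Hn; exfalso; exact (Hn (inputs_events (Hk i x Ek)))].
Qed.

Lemma free_choice_of_total_Ext T :
  (forall k, total_on T k -> Ext T k) -> free_choice T.
Proof.
  intros Htot k. split.
  - intros [HE Hmax].
    assert (Hc : total_on T (pf_join k (some_input T))).
    { apply pf_join_total; [intros i x; apply Ext_inputs, HE | apply some_input_total]. }
    rewrite <- (Hmax _ (Htot _ Hc) (pf_join_le_l _)). exact Hc.
  - intros Hk. split; [exact (Htot k Hk)|]. intros k' HE' Hle.
    apply pf_le_antisym; [|exact Hle]. intros i x Hi.
    destruct (proj1 (Hk i) (Ext_within HE' Hi)) as (y & Hy & _).
    rewrite (Hle i y Hy) in Hi. rewrite Hy. exact Hi.
Qed.

Lemma maxExt_exists T : free_choice T -> exists t, maxExt T t.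
Proof. intros HF. exists (some_input T). apply HF, some_input_total. Qed.

Lemma restrict_total T t k : total_on T t -> pf_le t k -> restrict (events T) k = t.
Proof.
  intros Ht Hle. extensionality i. destruct (classic (events T i)) as [He|He].
  - rewrite restrict_in by exact He.
    destruct (proj1 (Ht i) He) as (x & Hx & _). rewrite Hx. exact (Hle i x Hx).
  - rewrite restrict_out by exact He. symmetry. exact (proj2 (Ht i) He).
Qed.

Lemma total_on_restrict U T k :
  (forall i x, events T i -> (inputs U i x <-> inputs T i x)) ->
  total_on U k -> total_on T (restrict (events T) k).
Proof.
  intros HUT Hk i. split.
  - intros He. rewrite restrict_in by exact He.
    destruct (events_inputs He) as [x Hx].
    assert (HeU : events U i) by exact (inputs_events (proj2 (HUT i x He) Hx)).
    destruct (proj1 (Hk i) HeU) as (y & Hy & Hiy).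
    exists y. split; [exact Hy | apply HUT; assumption].
  - intros Hn. apply restrict_out, Hn.
Qed.

Lemma total_on_split U T1 T2 k :
  disjoint_events T1 T2 ->
  (forall i x, inputs U i x <-> inputs T1 i x \/ inputs T2 i x) ->
  total_on U k ->
  total_on T1 (restrict (events T1) k) /\ total_on T2 (restrict (events T2) k) /\
  pf_join (restrict (events T1) k) (restrict (events T2) k) = k.
Proof.
  intros HD HU Hk. split; [|split].
  - apply total_on_restrict with U; [|exact Hk]. intros i x He. rewrite HU.
    split; [intros [H|H]; [exact H | exfalso; exact (HD i He (inputs_events H))] | auto].
  - apply total_on_restrict with U; [|exact Hk]. intros i x He. rewrite HU.
    split; [intros [H|H]; [exfalso; exact (HD i (inputs_events H) He) | exact H] | auto].
  - apply pf_join_restrict. intros i x Hi.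
    destruct (classic (events U i)) as [He|He]; [|rewrite (proj2 (Hk i) He) in Hi; discriminate].
    destruct (events_inputs He) as [y Hy].
    apply HU in Hy as [Hy|Hy]; [left|right]; exact (inputs_events Hy).
Qed.

Fixpoint sublists {A : Type} (l : list A) : list (list A) :=
  match l with
  | nil => [nil]
  | a :: l' => sublists l' ++ map (cons a) (sublists l')
  end.

Lemma filter_in_sublists {A : Type} (p : A -> bool) l : In (filter p l) (sublists l).
Proof.
  induction l as [|a l IH]; simpl; [left; reflexivity|].
  destruct (p a); apply in_app_iff; [right; apply in_map | left]; exact IH.
Qed.

Lemma finite_of_bounded T l : (forall h, T h -> In h l) -> finite_pset T.
Proof.
  intros Hl.
  exists (filter (fun h => if excluded_middle_informative (T h) then true else false) l).
  intros h. rewrite filter_In.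
  destruct (excluded_middle_informative (T h)) as [Hh|Hh]; split.
  - intros _. split; [exact (Hl h Hh) | reflexivity].
  - intros _. exact Hh.
  - intros Hh'. contradiction.
  - intros [_ Hfalse]. discriminate.
Qed.

(* An element of Ext is the join of the members of T below it, i.e. of a
   sublist of an enumeration of T. *)
Lemma finite_Ext T : finite_pset T -> exists l, forall k, Ext T k -> In k l.
Proof.
  intros [l Hl].
  set (join_of := fun s : list (pfun I X) =>
    epsilon (inhabits (fun _ : I => @None X)) (is_join (fun f => In f s))).
  exists (map join_of (sublists l)). intros k (F & HS & _ & _ & HJ).
  set (below := filter
    (fun f => if excluded_middle_informative (pf_le f k) then true else false) l).
  assert (Hbelow : is_join (fun f => In f below) k).
  { intros i x. split.
    - intros Hi. destruct (proj1 (HJ i x) Hi) as (f & Hf & Hfi). exists f.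
      split; [|exact Hfi]. apply filter_In. split; [apply Hl, HS, Hf|].
      destruct (excluded_middle_informative (pf_le f k)) as [_|Hn];
        [reflexivity | exfalso; exact (Hn (is_join_le HJ Hf))].
    - intros (f & Hf & Hfi). apply filter_In in Hf as [_ Hf].
      destruct (excluded_middle_informative (pf_le f k)) as [Hle|];
        [exact (Hle i x Hfi) | discriminate]. }
  apply in_map_iff. exists below. split; [|apply filter_in_sublists].
  apply (is_join_unique (F := fun f => In f below)); [|exact Hbelow].
  apply epsilon_spec. exists k. exact Hbelow.
Qed.

End PartialFunctions.

Section Parallel.
Variables (I X : Type) (A B : pset I X).
Hypothesis disjointAB : disjoint_events A B.

Lemma par_inputs i x : inputs (par_comp A B) i x <-> inputs A i x \/ inputs B i x.
Proof. unfold inputs, par_comp. firstorder. Qed.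

Lemma par_below_l h f : vee_prime B -> A h -> pf_le f h -> (par_comp A B f <-> A f).
Proof.
  intros HVB Hh Hle. split; [intros [Hf|Hf]; [exact Hf|] | intros Hf; left; exact Hf].
  exfalso. exact (not_le_member disjointAB HVB Hh Hf Hle).
Qed.

Lemma par_below_r h f : vee_prime A -> B h -> pf_le f h -> (par_comp A B f <-> B f).
Proof.
  intros HVA Hh Hle. split; [intros [Hf|Hf]; [|exact Hf] | intros Hf; right; exact Hf].
  exfalso. exact (not_le_member (A := B) (fun i HB HA => disjointAB HA HB) HVA Hh Hf Hle).
Qed.

Lemma par_finite : finite_pset A -> finite_pset B -> finite_pset (par_comp A B).
Proof.
  intros [lA HlA] [lB HlB]. exists (lA ++ lB). intros h.
  rewrite in_app_iff, <- HlA, <- HlB. unfold par_comp. tauto.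
Qed.

Lemma par_vee_prime : vee_prime A -> vee_prime B -> vee_prime (par_comp A B).
Proof.
  intros HVA HVB F j HS HC HJ [Hj|Hj].
  - refine (vee_prime_at HVA Hj _ HS HC HJ).
    intros f Hle. apply (par_below_l HVB Hj Hle).
  - refine (vee_prime_at HVB Hj _ HS HC HJ).
    intros f Hle. apply (par_below_r HVA Hj Hle).
Qed.

Lemma par_total_Ext k : free_choice A -> free_choice B ->
  total_on (par_comp A B) k -> Ext (par_comp A B) k.
Proof.
  intros HFA HFB Hk.
  destruct (total_on_split disjointAB par_inputs Hk) as (HtA & HtB & Hsplit).
  rewrite <- Hsplit. apply Ext_union.
  - exact (proj1 (proj2 (HFA _) HtA)).
  - exact (proj1 (proj2 (HFB _) HtB)).
  - apply agree_of_le with k; apply restrict_le.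
Qed.

Lemma par_causally_complete : vee_prime A -> vee_prime B ->
  causally_complete A -> causally_complete B -> causally_complete (par_comp A B).
Proof.
  intros HVA HVB [HFA HTA] [HFB HTB]. split.
  - apply free_choice_of_total_Ext. intros k. apply par_total_Ext; assumption.
  - intros h [Hh|Hh].
    + rewrite (tips_below_eq (fun f Hle => par_below_l HVB Hh Hle)). exact (HTA h Hh).
    + rewrite (tips_below_eq (fun f Hle => par_below_r HVA Hh Hle)). exact (HTB h Hh).
Qed.

End Parallel.

Section Sequential.
Variables (I X : Type) (T1 T2 : pset I X).
Hypothesis disjoint12 : disjoint_events T1 T2.
Hypothesis vee2 : vee_prime T2.
Hypothesis free1 : free_choice T1.

Lemma seq_comp_intro t g : maxExt T1 t -> T2 g -> seq_comp T1 T2 (pf_join t g).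
Proof.
  intros Ht Hg. right. exists t, g. split; [exact Ht | split; [exact Hg|]].
  apply pf_join_is_join2.
  exact (agree_within disjoint12 (Ext_within (proj1 Ht)) (member_within Hg)).
Qed.

Lemma seq_inputs i x :
  inputs (seq_comp T1 T2) i x <-> inputs T1 i x \/ inputs T2 i x.
Proof.
  split.
  - intros (h & [Hh|(t & h' & Ht & Hh' & Hj)] & Hi); [left; exists h; auto|].
    apply Hj in Hi as [Hi|Hi];
      [left; exact (Ext_inputs (proj1 Ht) Hi) | right; exists h'; auto].
  - intros [(h & Hh & Hi)|(h' & Hh' & Hi)]; [exists h; split; [left|]; auto|].
    destruct (maxExt_exists free1) as [t Ht].
    exists (pf_join t h'). split; [apply seq_comp_intro; assumption|].
    apply (pf_join_le_r (agree_within disjoint12 (Ext_within (proj1 Ht)) (member_within Hh'))).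
    exact Hi.
Qed.

Lemma seq_events_split i : events (seq_comp T1 T2) i -> events T1 i \/ events T2 i.
Proof.
  intros He. destruct (events_inputs He) as [x Hx].
  apply seq_inputs in Hx as [Hx|Hx]; [left|right]; exact (inputs_events Hx).
Qed.

Lemma seq_below_T1 h f : T1 h -> pf_le f h -> (seq_comp T1 T2 f <-> T1 f).
Proof.
  intros Hh Hle. split; [|intros Hf; left; exact Hf].
  intros [Hf|(t & g & Ht & Hg & Hj)]; [exact Hf|]. exfalso.
  apply (not_le_member disjoint12 vee2 Hh Hg).
  apply pf_le_trans with f; [intros i x Hi; apply Hj; right; exact Hi | exact Hle].
Qed.

Lemma seq_member_events2 f i x :
  seq_comp T1 T2 f -> f i = Some x -> events T2 i ->
  exists t g, maxExt T1 t /\ T2 g /\ is_join2 t g f /\ g i = Some x.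
Proof.
  intros [Hf|(t & g & Ht & Hg & Hj)] Hfi He.
  - exfalso. exact (disjoint12 (member_within Hf Hfi) He).
  - exists t, g. split; [exact Ht | split; [exact Hg | split; [exact Hj|]]].
    apply Hj in Hfi as [Hti|Hgi]; [|exact Hgi].
    exfalso. exact (disjoint12 (Ext_within (proj1 Ht) Hti) He).
Qed.

Definition seq_part2 (F : pset I X) : pset I X := fun g =>
  T2 g /\ exists f t, F f /\ maxExt T1 t /\ is_join2 t g f.

Lemma seq_part2_join F j : subset F (seq_comp T1 T2) -> is_join F j ->
  compatible (seq_part2 F) /\ is_join (seq_part2 F) (restrict (events T2) j).
Proof.
  intros HS HJ. apply is_join_of_cover.
  - intros g (Hg & f & t & Hf & Ht & Hj) i x Hgi.
    rewrite restrict_in by exact (member_within Hg Hgi).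
    apply (is_join_le HJ Hf), Hj. right. exact Hgi.
  - intros i x Hi. apply restrict_some in Hi as [He Hji].
    destruct (proj1 (HJ i x) Hji) as (f & Hf & Hfi).
    destruct (seq_member_events2 (HS f Hf) Hfi He) as (t & g & Ht & Hg & Hj & Hgi).
    exists g. split; [split; [exact Hg | exists f, t; auto] | exact Hgi].
Qed.

Lemma Ext_seq_cases k : Ext (seq_comp T1 T2) k ->
  Ext T1 k \/ exists t k', maxExt T1 t /\ Ext T2 k' /\ k = pf_join t k'.
Proof.
  intros (F & HS & HN & HC & HJ).
  destruct (classic (subset F T1)) as [H1|H1]; [left; exists F; auto|right].
  apply not_all_ex_not in H1 as [f0 Hf0]. apply imply_to_and in Hf0 as [Hf0 Hf0'].
  destruct (HS f0 Hf0) as [|(t & g0 & Ht & Hg0 & Hj0)]; [contradiction|].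
  destruct (seq_part2_join HS HJ) as [HC2 HJ2].
  exists t, (restrict (events T2) k). split; [exact Ht | split].
  - exists (seq_part2 F). split; [intros g [Hg _]; exact Hg|].
    split; [exists g0; split; [exact Hg0 | exists f0, t; auto] | auto].
  - assert (Htk : pf_le t k).
    { apply pf_le_trans with f0; [|exact (is_join_le HJ Hf0)].
      intros i x Hi. apply Hj0. left. exact Hi. }
    rewrite <- (restrict_total (proj1 (free1 t) Ht) Htk).
    symmetry. apply pf_join_restrict. intros i x Hi.
    destruct (proj1 (HJ i x) Hi) as (f & Hf & Hfi).
    exact (seq_events_split (member_within (HS f Hf) Hfi)).
Qed.

Lemma seq_vee_prime : vee_prime T1 -> vee_prime (seq_comp T1 T2).
Proof.
  intros HV1 F j HS HC HJ [Hj|(t & h' & Ht & Hh' & Hj)].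
  - refine (vee_prime_at HV1 Hj _ HS HC HJ).
    intros f Hle. apply (seq_below_T1 Hj Hle).
  - apply is_join2_pf_join in Hj. subst j.
    destruct (seq_part2_join HS HJ) as [HC2 HJ2].
    rewrite (restrict_pf_join_r disjoint12 (Ext_within (proj1 Ht)) (member_within Hh'))
      in HJ2.
    assert (HG : seq_part2 F h') by (apply vee2; auto; intros g [Hg _]; exact Hg).
    destruct HG as (_ & f & t' & Hf & Ht' & Hj').
    apply is_join2_pf_join in Hj'. subst f.
    replace t with t'; [exact Hf|].
    apply (maxExt_unique_below free1 Ht' Ht (h := pf_join t h')); [|apply pf_join_le_l].
    exact (pf_le_trans (pf_join_le_l h') (is_join_le HJ Hf)).
Qed.

Lemma seq_finite : finite_pset T1 -> finite_pset T2 -> finite_pset (seq_comp T1 T2).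
Proof.
  intros Hfin1 [l2 Hl2]. destruct (finite_Ext Hfin1) as [lE HlE].
  destruct Hfin1 as [l1 Hl1].
  apply finite_of_bounded with (l1 ++ flat_map (fun t => map (pf_join t) l2) lE).
  intros h [Hh|(t & h' & Ht & Hh' & Hj)]; apply in_app_iff; [left; apply Hl1, Hh|right].
  apply is_join2_pf_join in Hj. subst h. apply in_flat_map.
  exists t. split; [exact (HlE t (proj1 Ht)) | apply in_map, Hl2, Hh'].
Qed.

Lemma seq_total_Ext k : free_choice T2 ->
  total_on (seq_comp T1 T2) k -> Ext (seq_comp T1 T2) k.
Proof.
  intros free2 Hk.
  destruct (total_on_split disjoint12 seq_inputs Hk) as (Ht1 & Ht2 & Hsplit).
  rewrite <- Hsplit. apply Ext_pf_join_l with T2.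
  - exact (proj1 (proj2 (free2 _) Ht2)).
  - intros g Hg. apply seq_comp_intro; [apply free1, Ht1 | exact Hg].
Qed.

Lemma seq_tip_is_tip2 t h' i : maxExt T1 t -> T2 h' ->
  tips (seq_comp T1 T2) (pf_join t h') i -> tips T2 h' i.
Proof.
  intros Ht Hh' [Hd Hn].
  pose proof (Ext_within (proj1 Ht)) as Wt.
  pose proof (agree_within disjoint12 Wt (member_within Hh')) as Hag.
  assert (Hti : t i = None).
  { destruct (t i) as [x|] eqn:Eti; [exfalso|reflexivity]. apply Hn.
    exists t. split; [exact (Ext_mono (fun f Hf => or_introl Hf) (proj1 Ht))|].
    split; [split; [apply pf_join_le_l | intros Heq] | unfold dom; rewrite Eti; discriminate].
    destruct (vee_prime_nonempty vee2 Hh') as (a & y & Ha).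
    assert (Hta : t a = Some y) by (rewrite Heq; exact (pf_join_le_r Hag Ha)).
    exact (disjoint12 (Wt a y Hta) (member_within Hh' Ha)). }
  unfold dom, pf_join in Hd. rewrite Hti in Hd.
  split; [exact Hd|]. intros (k' & Hk' & [Hle Hne] & Hdk'). apply Hn.
  exists (pf_join t k'). split; [|split; [split|]].
  - apply Ext_pf_join_l with T2; [exact Hk' | intros g Hg; apply seq_comp_intro; assumption].
  - apply pf_join_mono_r, Hle.
  - intros Heq. apply Hne.
    rewrite <- (restrict_pf_join_r disjoint12 Wt (Ext_within Hk')), Heq.
    exact (restrict_pf_join_r disjoint12 Wt (member_within Hh')).
  - unfold dom, pf_join. rewrite Hti. exact Hdk'.
Qed.

Lemma tip2_is_seq_tip t h' i : maxExt T1 t -> T2 h' ->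
  tips T2 h' i -> tips (seq_comp T1 T2) (pf_join t h') i.
Proof.
  intros Ht Hh' [Hd Hn].
  pose proof (Ext_within (proj1 Ht)) as Wt.
  pose proof (member_within Hh') as Wh'.
  unfold dom in Hd. destruct (h' i) as [y|] eqn:Ehi; [clear Hd|contradiction].
  assert (Hti : t i = None).
  { destruct (t i) as [x|] eqn:Eti; [exfalso|reflexivity].
    exact (disjoint12 (Wt i x Eti) (Wh' i y Ehi)). }
  split; [unfold dom, pf_join; rewrite Hti, Ehi; discriminate|].
  intros (k & Hk & [Hle Hne] & Hdk). apply Hn.
  unfold dom in Hdk. destruct (k i) as [x|] eqn:Eki; [clear Hdk|contradiction].
  destruct (Ext_seq_cases Hk) as [Hk1|(t' & k' & Ht' & Hk' & ->)].
  { exfalso. exact (disjoint12 (Ext_within Hk1 Eki) (Wh' i y Ehi)). }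
  assert (t' = t) as ->.
  { apply (maxExt_unique_below free1 Ht' Ht (h := pf_join t h')); [|apply pf_join_le_l].
    exact (pf_le_trans (pf_join_le_l k') Hle). }
  exists k'. split; [exact Hk'| split; [split|]].
  - rewrite <- (restrict_pf_join_r disjoint12 Wt (Ext_within Hk')),
            <- (restrict_pf_join_r disjoint12 Wt Wh').
    apply restrict_mono, Hle.
  - intros Heq. apply Hne. rewrite Heq. reflexivity.
  - unfold dom. unfold pf_join in Eki. rewrite Hti in Eki. rewrite Eki. discriminate.
Qed.

Lemma seq_tips_join t h' : maxExt T1 t -> T2 h' ->
  tips (seq_comp T1 T2) (pf_join t h') = tips T2 h'.
Proof.
  intros Ht Hh'. extensionality i. apply propositional_extensionality.
  split; [apply seq_tip_is_tip2 | apply tip2_is_seq_tip]; assumption.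
Qed.

Lemma seq_causally_complete :
  unique_tips T1 -> causally_complete T2 -> causally_complete (seq_comp T1 T2).
Proof.
  intros HT1 [free2 HT2]. split.
  - apply free_choice_of_total_Ext. intros k. apply seq_total_Ext, free2.
  - intros h [Hh|(t & h' & Ht & Hh' & Hj)].
    + rewrite (tips_below_eq (fun f Hle => seq_below_T1 Hh Hle)). exact (HT1 h Hh).
    + apply is_join2_pf_join in Hj. subst h.
      rewrite (seq_tips_join Ht Hh'). exact (HT2 h' Hh').
Qed.

End Sequential.

Theorem proposition17 (I X : Type) (Theta Theta' : pset I X) :
  space Theta -> causally_complete Theta ->
  space Theta' -> causally_complete Theta' ->
  disjoint_events Theta Theta' ->
  (space (par_comp Theta Theta') /\ causally_complete (par_comp Theta Theta')) /\
  (space (seq_comp Theta Theta') /\ causally_complete (seq_comp Theta Theta')).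
Proof.
  intros [Hfin1 HV1] HC1 [Hfin2 HV2] HC2 HD.
  pose proof HC1 as [free1 HT1].
  split; split.
  - split; [apply par_finite | apply par_vee_prime]; assumption.
  - apply par_causally_complete; assumption.
  - split; [apply seq_finite | apply seq_vee_prime]; assumption.
  - apply seq_causally_complete; assumption.
Qed.
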